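(* Let $R$ be a unital associative ring, $n=3$ and $k\ge2$. Then $${\cal S}={\rm dom}(J)\cap{\rm dom}(J^{-1})={\rm dom}(J^k)\quad\text{and}\quad \widehat{\cal S}={\rm dom}(\Phi)\cap{\rm dom}(\Phi^{-1})={\rm dom}(\Phi^k).$$ Furthermore, $J$ restricted to ${\cal S}$ is a bijection from ${\cal S}$ onto itself, and $\Phi$ restricted to $\widehat{\cal S}$ is a bijection from $\widehat{\cal S}$ onto itself.
   Context: $R^*$: units of $R$. $M_3^*(R)$: invertible $3\times3$ matrices; $M_3^\star(R)$: matrices with all entries in $R^*$. $J_1(M)=M^{-1}$ on $M_3^*(R)$; $J_2(M)_{jk}=(M_{kj})^{-1}$ on $M_3^\star(R)$; $J=J_2\circ J_1$, $J^{-1}=J_1\circ J_2$, where $g\circ f$ has domain $\{x\in{\rm dom}(f):f(x)\in{\rm dom}(g)\}$, and powers are iterated compositions. $\widehat M_3(R)$: matrices whose first row and column consist of $1$'s. For $A=\{a_{j,k}\}\in M_3^\star(R)$: $\Lambda^L(A)_{j,k}=a_{1,1}a_{j,1}^{-1}a_{j,k}a_{1,k}^{-1}$, $\Lambda^R(A)_{j,k}=a_{j,1}^{-1}a_{j,k}a_{1,k}^{-1}a_{1,1}$. $\Phi(A)=J_2(\Lambda^L(A^{-1}))$ with ${\rm dom}(\Phi)={\rm dom}(J)\cap\widehat M_3(R)\cap M_3^\star(R)$; $\Phi^{-1}(A)=\Lambda^R(J^{-1}(A))$ with domain $\widehat M_3(R)\cap\{M\in{\rm dom}(J^{-1}):J^{-1}(M)\in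 M_3^\star(R)\}$. ${\cal S}=\{M\in M_3(R):$ all square submatrices of $M$ (including $M$ and its $1\times1$ submatrices) are invertible and $J_2(M)$ is invertible$\}$, and $\widehat{\cal S}={\cal S}\cap\widehat M_3(R)$. *)

From mathcomp Require Import all_boot all_order all_algebra.
From Stdlib Require Import ClassicalEpsilon.
Set Implicit Arguments. Unset Strict Implicit. Unset Printing Implicit Defensive.
Import GRing.Theory.
Local Open Scope ring_scope.

Section PFun.
Variable T : Type.
Definition pfun := T -> option T.
Definition pdom (f : pfun) (x : T) : Prop := f x <> None.
Definition pcomp (g f : pfun) : pfun :=
  fun x => match f x with Some y => g y | None => None end.
Fixpoint piter (n : nat) (f : pfun) : pfun :=
  match n with O => fun x => Some x | S n' => pcomp f (piter n' f) end.
Definition pbij_on (P : T -> Prop) (f : pfun) : Prop :=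
  [/\ (forall x, P x -> exists2 y, f x = Some y & P y),
      (forall x y, P x -> P y -> f x = f y -> x = y) &
      (forall y, P y -> exists2 x, P x & f x = Some y)].
End PFun.

Section Mats.
Variable R : unitRingType.

Definition mx_inv_of (m : nat) (M N : 'M[R]_m) : Prop :=
  M *m N = 1%:M /\ N *m M = 1%:M.
Definition mx_invertible (m : nat) (M : 'M[R]_m) : Prop :=
  exists N, mx_inv_of M N.

Definition J1 : pfun 'M[R]_3 := fun M =>
  match excluded_middle_informative (mx_invertible M) with
  | left H => Some (proj1_sig (constructive_indefinite_description _ H))
  | right _ => None
  end.

Definition all_units (M : 'M[R]_3) : bool :=
  [forall i, [forall j, M i j \is a GRing.unit]].

Definition J2tot (M : 'M[R]_3) : 'M[R]_3 := \matrix_(j, k) (M k j)^-1.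
Definition J2 : pfun 'M[R]_3 := fun M =>
  if all_units M then Some (J2tot M) else None.

Definition J : pfun 'M[R]_3 := pcomp J2 J1.
Definition Jinv : pfun 'M[R]_3 := pcomp J1 J2.

Definition is_hat (M : 'M[R]_3) : Prop :=
  forall i, M ord0 i = 1 /\ M i ord0 = 1.

Definition LamL (A : 'M[R]_3) : 'M[R]_3 :=
  \matrix_(j, k) (A ord0 ord0 * (A j ord0)^-1 * A j k * (A ord0 k)^-1).
Definition LamR (A : 'M[R]_3) : 'M[R]_3 :=
  \matrix_(j, k) ((A j ord0)^-1 * A j k * (A ord0 k)^-1 * A ord0 ord0).

(* Phi(A) = J_2(Lambda^L(A^{-1})), dom(Phi) = dom(J) /\ hat /\ M_3^star.
   (On this domain Lambda^L(A^{-1}) has unit entries, so J_2 is applied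
   via its total formula J2tot.) *)
Definition Phi : pfun 'M[R]_3 := fun A =>
  match excluded_middle_informative (is_hat A /\ all_units A) with
  | left _ => match J1 A with
              | Some B => if all_units B then Some (J2tot (LamL B)) else None
              | None => None
              end
  | right _ => None
  end.

(* Phi^{-1}(A) = Lambda^R(J^{-1}(A)),
   domain hat /\ {M in dom(J^{-1}) | J^{-1}(M) in M_3^star} *)
Definition Phiinv : pfun 'M[R]_3 := fun A =>
  match excluded_middle_informative (is_hat A) with
  | left _ => match Jinv A with
              | Some B => if all_units B then Some (LamR B) else None
              | None => None
              end
  | right _ => None
  end.

(* the set S: all square submatrices (rows f, columns g, strictly increasing
   index selections of size m >= 1) are invertible, and J_2(M) is invertible *)
Definition incr (m : nat) (f : 'I_m -> 'I_3) : Prop :=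
  forall i j : 'I_m, (i < j)%N -> (f i < f j)%N.

Definition inS (M : 'M[R]_3) : Prop :=
  (forall (m : nat) (f g : 'I_m -> 'I_3), (0 < m)%N -> incr f -> incr g ->
      mx_invertible (mxsub f g M))
  /\ (exists2 N, J2 M = Some N & mx_invertible N).

Definition inShat (M : 'M[R]_3) : Prop := inS M /\ is_hat M.
End Mats.

(* Write N = M^-1 and M* for the entrywise inverse of the transpose of M, so
   that J(M) = N*.  By Jacobi's complementary minor identity a 2x2 minor of M
   is invertible iff the corresponding entry of N is a unit; hence S consists
   of the invertible M such that M and N have unit entries and M* is
   invertible, i.e. the intersection of dom J and dom J^-1.  The heart of the
   matter is that, for such M, N* is invertible iff M* is: Schur complements
   at the top left entry reduce both to 2x2 matrices of quasideterminants, and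
   Jacobi's identity shows that these are related by entrywise inversion,
   reversal of rows and columns, and diagonal scaling.  So J maps S into S,
   dom J^2 is contained in S, and J^-1 inverts J on S.  Finally Phi is J
   followed by diagonal scalings that normalise the first row and column to
   1's, so the results for Phi on hat-S follow from those for J. *)

From Pilot Require Import Defs.
From Stdlib Require Import Classical ClassicalEpsilon.
From mathcomp Require Import all_boot all_order all_algebra zify.
Set Implicit Arguments. Unset Strict Implicit. Unset Printing Implicit Defensive.
Import GRing.Theory.
Local Open Scope ring_scope.

Section PartialMaps.
Variable T : Type.
Implicit Types f : pfun T.

Lemma pdom_piter2 f x : pdom (piter 2 f) x <-> exists2 y, f x = Some y & pdom f y.
Proof.
rewrite /pdom /= /Defs.pcomp; case: (f x) => [y|]; last by split=> // -[].
by split=> [fy | [_ [<-]]]; first exists y.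
Qed.

Lemma piter_stable (P : T -> Prop) f :
  (forall x, P x -> exists2 y, f x = Some y & P y) ->
  forall n x, P x -> exists2 y, piter n f x = Some y & P y.
Proof.
move=> hf; elim=> [|n IH] x Px; first by exists x.
have [y fy Py] := IH x Px; have [z fz Pz] := hf y Py.
by exists z => //; rewrite /= /Defs.pcomp fy.
Qed.

Lemma pdom_piter_le f m n x : (m <= n)%N -> pdom (piter n f) x -> pdom (piter m f) x.
Proof.
elim: n => [|n IH]; first by rewrite leqn0 => /eqP ->.
rewrite leq_eqVlt => /orP [/eqP -> // | /IH hm h]; apply: hm; move: h.
by rewrite /pdom /= /Defs.pcomp; case: (piter n f x).
Qed.

Lemma pdom_piter_stable (P : T -> Prop) f k : (2 <= k)%N ->
  (forall x, P x -> exists2 y, f x = Some y & P y) ->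
  (forall x, pdom (piter 2 f) x -> P x) ->
  forall x, P x <-> pdom (piter k f) x.
Proof.
move=> hk hf h2 x; split=> [Px | /(pdom_piter_le hk)]; last exact: h2.
by have [y fy _] := piter_stable hf k Px; rewrite /pdom fy.
Qed.

Lemma pbij_on_eq (P Q : T -> Prop) f :
  (forall x, P x <-> Q x) -> pbij_on P f -> pbij_on Q f.
Proof.
move=> PQ [hmap hinj hsurj]; split.
- by move=> x /PQ /hmap [y fy /PQ Qy]; exists y.
- by move=> x y /PQ Px /PQ Py; apply: hinj.
- by move=> y /PQ /hsurj [x /PQ Qx fx]; exists x.
Qed.

End PartialMaps.

Section MatrixInverse.
Variable R : unitRingType.

Lemma mx_inv_of_uniq n (M N N' : 'M[R]_n) : mx_inv_of M N -> mx_inv_of M N' -> N = N'.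
Proof. by case=> MN _ [_ N'M]; rewrite -[N]mul1mx -N'M -mulmxA MN mulmx1. Qed.

Lemma mx_inv_ofC n (M N : 'M[R]_n) : mx_inv_of M N -> mx_inv_of N M.
Proof. by case. Qed.

Lemma mx_inv_of_invertible n (M N : 'M[R]_n) : mx_inv_of M N -> mx_invertible M.
Proof. by exists N. Qed.

Lemma mx_inv_ofM n (A Ai B Bi : 'M[R]_n) :
  mx_inv_of A Ai -> mx_inv_of B Bi -> mx_inv_of (A *m B) (Bi *m Ai).
Proof.
case=> AAi AiA [BBi BiB]; split.
  by rewrite mulmxA -(mulmxA A) BBi mulmx1 AAi.
by rewrite mulmxA -(mulmxA Bi) AiA mulmx1 BiB.
Qed.

Lemma mx_invertible_mulmx n (D Di E Ei X : 'M[R]_n) :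
  mx_inv_of D Di -> mx_inv_of E Ei ->
  mx_invertible (D *m X *m E) <-> mx_invertible X.
Proof.
move=> hD hE; split => -[Y hY]; last first.
  by eexists; apply: mx_inv_ofM (mx_inv_ofM hD hY) hE.
have -> : X = Di *m (D *m X *m E) *m Ei.
  by case: hD hE => _ DiD [EEi _]; rewrite !mulmxA DiD mul1mx -mulmxA EEi mulmx1.
by eexists; apply: mx_inv_ofM (mx_inv_ofM (mx_inv_ofC hD) hY) (mx_inv_ofC hE).
Qed.

Lemma mx_inv_of_mxsub n (M N : 'M[R]_n) (f g : 'I_n -> 'I_n) :
  injective f -> injective g -> mx_inv_of M N ->
  mx_inv_of (mxsub f g M) (mxsub g f N).
Proof.
have mxsub_mul1 (h k : 'I_n -> 'I_n) (X Y : 'M[R]_n) :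
    injective h -> injective k -> X *m Y = 1%:M -> mxsub h k X *m mxsub k h Y = 1%:M.
  move=> hi ki XY; apply/matrixP => a b; rewrite !mxE.
  under eq_bigr do rewrite !mxE.
  transitivity (\sum_c X (h a) c * Y c (h b)); first exact: esym (reindex_inj ki).
  by move/matrixP: XY => /(_ (h a) (h b)); rewrite !mxE (inj_eq hi) => <-.
by move=> fi gi [MN NM]; split; apply: mxsub_mul1.
Qed.

Lemma mx_invertible_mxsub n (M : 'M[R]_n) (f g : 'I_n -> 'I_n) :
  bijective f -> bijective g -> mx_invertible (mxsub f g M) <-> mx_invertible M.
Proof.
move=> [f' ff' f'f] [g' gg' g'g].
have fi := can_inj ff'; have gi := can_inj gg'.
split=> -[N hN]; last by eexists; apply: mx_inv_of_mxsub hN.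
have -> : M = mxsub f' g' (mxsub f g M).
  by apply/matrixP => a b; rewrite !mxE !f'f !g'g.
by eexists; apply: mx_inv_of_mxsub hN; apply: can_inj; [apply: f'f | apply: g'g].
Qed.

Lemma mx_inv_of1 (X Y : 'M[R]_1) :
  mx_inv_of X Y <-> X ord0 ord0 * Y ord0 ord0 = 1 /\ Y ord0 ord0 * X ord0 ord0 = 1.
Proof.
have mul11 (A B : 'M[R]_1) : (A *m B) ord0 ord0 = A ord0 ord0 * B ord0 ord0.
  by rewrite mxE big_ord1.
split=> [[XY YX] | [XY YX]].
  by move/matrixP: XY => /(_ ord0 ord0); move/matrixP: YX => /(_ ord0 ord0);
     rewrite !mul11 !mxE => -> ->.
by split; apply/matrixP => a b; rewrite !ord1 mul11 mxE.
Qed.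

Lemma mx_invertible1 (X : 'M[R]_1) :
  mx_invertible X <-> X ord0 ord0 \is a GRing.unit.
Proof.
split=> [[Y /mx_inv_of1 [XY YX]] | uX]; first by apply/unitrP; exists (Y ord0 ord0).
by exists (X ord0 ord0)^-1%:M; apply/mx_inv_of1; rewrite mxE mulr1n mulrV ?mulVr.
Qed.

Lemma block_mx_mul1 m1 m2 (A : 'M[R]_m1) B C (D : 'M[R]_m2) P Q U V :
  block_mx A B C D *m block_mx P Q U V = 1%:M ->
  [/\ A *m P + B *m U = 1%:M, A *m Q + B *m V = 0,
      C *m P + D *m U = 0 & C *m Q + D *m V = 1%:M].
Proof. by rewrite mulmx_block (scalar_mx_block m1 m2 1) => /eq_block_mx. Qed.

Lemma mx_inv_of_block_schur m1 m2 (A : 'M[R]_m1) B C (D : 'M[R]_m2) P Q U V :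
  mx_inv_of (block_mx A B C D) (block_mx P Q U V) ->
  (forall Vi, mx_inv_of V Vi -> mx_inv_of A (P - Q *m Vi *m U)) /\
  (forall Ai, mx_inv_of A Ai -> mx_inv_of V (D - C *m Ai *m B)).
Proof.
move=> [/block_mx_mul1 [e1 e2 _ e4] /block_mx_mul1 [f1 _ f3 f4]].
have AQ : A *m Q = - (B *m V) by rewrite -(addr0_eq e2) opprK.
have UA : U *m A = - (V *m C) by rewrite -(addr0_eq f3) opprK.
split=> [Vi [VVi ViV] | Ai [AAi AiA]]; split.
- by rewrite mulmxBr !mulmxA AQ !mulNmx -(mulmxA B) VVi mulmx1 opprK.
- by rewrite mulmxBl -!mulmxA UA !mulmxN (mulmxA Vi) ViV mul1mx opprK.
- by rewrite mulmxBr !mulmxA -(addr0_eq f3) !mulNmx -(mulmxA U) AAi mulmx1 opprK addrC.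
- by rewrite mulmxBl -!mulmxA -(addr0_eq e2) !mulmxN (mulmxA Ai) AiA mul1mx opprK addrC.
Qed.

Lemma mx_inv_of_block_unitri_lower m1 m2 (X : 'M[R]_(m2, m1)) :
  mx_inv_of (block_mx 1%:M 0 X 1%:M) (block_mx 1%:M 0 (- X) 1%:M).
Proof.
by split; rewrite mulmx_block (scalar_mx_block m1 m2 1) !mul1mx !mul0mx !mulmx0
   !mulmx1 ?addr0 ?add0r ?subrr ?addNr.
Qed.

Lemma mx_inv_of_block_unitri_upper m1 m2 (X : 'M[R]_(m1, m2)) :
  mx_inv_of (block_mx 1%:M X 0 1%:M) (block_mx 1%:M (- X) 0 1%:M).
Proof.
by split; rewrite mulmx_block (scalar_mx_block m1 m2 1) !mul1mx !mul0mx !mulmx0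
   !mulmx1 ?addr0 ?add0r ?subrr ?addNr.
Qed.

Lemma mx_inv_of_block_diag m1 m2 (A Ai : 'M[R]_m1) (D Di : 'M[R]_m2) :
  mx_inv_of A Ai -> mx_inv_of D Di ->
  mx_inv_of (block_mx A 0 0 D) (block_mx Ai 0 0 Di).
Proof.
case=> AAi AiA [DDi DiD]; split;
  by rewrite mulmx_block (scalar_mx_block m1 m2 1) !mul0mx !mulmx0 ?addr0 ?add0r
     ?AAi ?AiA ?DDi ?DiD.
Qed.

Lemma block_mx_invertible_schur m1 m2 (A : 'M[R]_m1) B C (D : 'M[R]_m2) Ai :
  mx_inv_of A Ai ->
  mx_invertible (block_mx A B C D) <-> mx_invertible (D - C *m Ai *m B).
Proof.
move=> hA; split=> -[Si hS].
  move: hS; rewrite -(submxK Si) => /mx_inv_of_block_schur [_ /(_ _ hA) hV].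
  exact: mx_inv_of_invertible (mx_inv_ofC hV).
have -> : block_mx A B C D = block_mx 1%:M 0 (C *m Ai) 1%:M *m
    block_mx A 0 0 (D - C *m Ai *m B) *m block_mx 1%:M (Ai *m B) 0 1%:M.
  case: hA => AAi AiA; rewrite !mulmx_block !mul1mx !mul0mx !mulmx0 !mulmx1.
  rewrite !addr0 !add0r (mulmxA A) AAi mul1mx -(mulmxA C Ai A) AiA mulmx1.
  by rewrite (mulmxA C) addrC subrK.
eexists; apply: mx_inv_ofM (mx_inv_of_block_unitri_upper _).
exact: mx_inv_ofM (mx_inv_of_block_unitri_lower _) (mx_inv_of_block_diag hA hS).
Qed.

Definition schur0 n (X : 'M[R]_n.+1) : 'M[R]_n := \matrix_(a, b)
  (X (lift ord0 a) (lift ord0 b) - X (lift ord0 a) ord0 * (X ord0 ord0)^-1 * X ord0 (lift ord0 b)).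

Lemma rshift1_lift0 n (a : 'I_n) : rshift 1 a = lift ord0 a.
Proof. exact: val_inj. Qed.

Lemma lshift_ord0 n : lshift n (ord0 : 'I_1) = ord0.
Proof. exact: val_inj. Qed.

Lemma drsubmx_lift0 n (X : 'M[R]_(1 + n)) : drsubmx X = mxsub (lift ord0) (lift ord0) X.
Proof. by apply/matrixP => a b; rewrite !mxE !rshift1_lift0. Qed.

Lemma ulsubmx_inv_of n (X : 'M[R]_(1 + n)) : X ord0 ord0 \is a GRing.unit ->
  mx_inv_of (ulsubmx X) (X ord0 ord0)^-1%:M.
Proof. by move=> uX; apply/mx_inv_of1; rewrite !mxE mulr1n lshift_ord0 mulrV ?mulVr. Qed.

Lemma block_schur0 n (X : 'M[R]_(1 + n)) :
  drsubmx X - dlsubmx X *m (X ord0 ord0)^-1%:M *m ursubmx X = schur0 X.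
Proof.
apply/matrixP => a b; rewrite !mxE big_ord1 !mxE big_ord1 !mxE mulr1n.
by rewrite !rshift1_lift0 lshift_ord0.
Qed.

Lemma mx_invertible_schur0 n (X : 'M[R]_n.+1) :
  X ord0 ord0 \is a GRing.unit -> mx_invertible X <-> mx_invertible (schur0 X).
Proof.
move=> /(@ulsubmx_inv_of n X) /(block_mx_invertible_schur
  (@ursubmx _ 1 n 1 n X) (@dlsubmx _ 1 n 1 n X) (@drsubmx _ 1 n 1 n X)).
by rewrite submxK block_schur0.
Qed.

End MatrixInverse.

Section Jacobi.
Variable R : unitRingType.

Lemma mx_inv_of_minor0 n (M N : 'M[R]_(1 + n)) : mx_inv_of M N ->
  (mx_invertible (mxsub (lift ord0) (lift ord0) M) -> N ord0 ord0 \is a GRing.unit) /\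
  (N ord0 ord0 \is a GRing.unit -> mx_inv_of (mxsub (lift ord0) (lift ord0) M) (schur0 N)).
Proof.
move=> /mx_inv_ofC; rewrite -[N in mx_inv_of N]submxK -[M in mx_inv_of _ M]submxK.
move=> /mx_inv_of_block_schur [hN hM]; rewrite -drsubmx_lift0; split.
  by case=> Di /hN /mx_inv_of_invertible /mx_invertible1; rewrite !mxE !lshift_ord0.
by move=> /ulsubmx_inv_of /hM; rewrite block_schur0.
Qed.

Definition pivot_first n (i a : 'I_n.+1) : 'I_n.+1 :=
  if unlift ord0 a is Some x then lift i x else i.

Lemma pivot_first0 n (i : 'I_n.+1) : pivot_first i ord0 = i.
Proof. by rewrite /pivot_first unlift_none. Qed.

Lemma pivot_first_lift0 n (i : 'I_n.+1) a : pivot_first i (lift ord0 a) = lift i a.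
Proof. by rewrite /pivot_first liftK. Qed.

Lemma pivot_first_inj n (i : 'I_n.+1) : injective (pivot_first i).
Proof.
move=> a b; rewrite /pivot_first.
case: (unliftP ord0 a) => [x ->|->]; case: (unliftP ord0 b) => [y ->|->] //.
- by move/lift_inj->.
- by move/eqP; rewrite eq_sym (negbTE (neq_lift _ _)).
- by move/eqP; rewrite (negbTE (neq_lift _ _)).
Qed.

Lemma mx_inv_of_minor n (M N : 'M[R]_n.+1) i j : mx_inv_of M N ->
  (mx_invertible (mxsub (lift i) (lift j) M) -> N j i \is a GRing.unit) /\
  (N j i \is a GRing.unit -> mx_inv_of (mxsub (lift i) (lift j) M) (\matrix_(a, b)
     (N (lift j a) (lift i b) - N (lift j a) i * (N j i)^-1 * N j (lift i b)))).
Proof.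
move=> /(mx_inv_of_mxsub (@pivot_first_inj n i) (@pivot_first_inj n j)) /(@mx_inv_of_minor0 n).
have -> : mxsub (lift ord0) (lift ord0) (mxsub (pivot_first i) (pivot_first j) M) =
          mxsub (lift i) (lift j) M.
  by apply/matrixP => a b; rewrite !mxE !pivot_first_lift0.
rewrite mxE !pivot_first0 => -[hM hN]; split=> // /hN.
congr mx_inv_of; apply/matrixP => a b.
by rewrite !mxE !pivot_first_lift0 !pivot_first0.
Qed.

Lemma mx_invertible_minor n (M N : 'M[R]_n.+1) i j : mx_inv_of M N ->
  mx_invertible (mxsub (lift i) (lift j) M) <-> N j i \is a GRing.unit.
Proof. by move=> /(mx_inv_of_minor i j) [hM hN]; split=> // /hN /mx_inv_of_invertible. Qed.

End Jacobi.

Section DiagonalScaling.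
Variable R : unitRingType.

Definition unit_entries m n (X : 'M[R]_(m, n)) : Prop :=
  forall i j, X i j \is a GRing.unit.

Definition unit_fun n (d : 'I_n -> R) : Prop := forall i, d i \is a GRing.unit.

Definition dscale n (d e : 'I_n -> R) (X : 'M[R]_n) : 'M[R]_n :=
  \matrix_(i, j) (d i * X i j * e j).

Lemma dscaleE n (d e : 'I_n -> R) X :
  dscale d e X = diag_mx (\row_i d i) *m X *m diag_mx (\row_j e j).
Proof. by apply/matrixP => i j; rewrite mul_mx_diag mul_diag_mx !mxE. Qed.

Lemma unit_funV n (d : 'I_n -> R) : unit_fun d -> unit_fun (fun i => (d i)^-1).
Proof. by move=> ud i; rewrite unitrV. Qed.

Lemma mx_inv_of_diag n (d : 'I_n -> R) : unit_fun d ->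
  mx_inv_of (diag_mx (\row_i d i)) (diag_mx (\row_i (d i)^-1)).
Proof.
by move=> ud; split; rewrite mulmx_diag; apply/matrixP => i j; rewrite !mxE ?mulrV ?mulVr.
Qed.

Lemma mx_inv_of_dscale n (d e : 'I_n -> R) X Y : unit_fun d -> unit_fun e ->
  mx_inv_of X Y -> mx_inv_of (dscale d e X) (dscale (fun j => (e j)^-1) (fun i => (d i)^-1) Y).
Proof.
move=> ud ue hXY; rewrite !dscaleE.
have := mx_inv_ofM (mx_inv_ofM (mx_inv_of_diag ud) hXY) (mx_inv_of_diag ue).
by rewrite mulmxA.
Qed.

Lemma mx_invertible_dscale n (d e : 'I_n -> R) X : unit_fun d -> unit_fun e ->
  mx_invertible (dscale d e X) <-> mx_invertible X.
Proof. by move=> ud ue; rewrite dscaleE; apply: mx_invertible_mulmx; apply: mx_inv_of_diag. Qed.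

Lemma unit_entries_dscale n (d e : 'I_n -> R) X : unit_fun d -> unit_fun e ->
  unit_entries X -> unit_entries (dscale d e X).
Proof. by move=> ud ue uX i j; rewrite mxE unitrMl // unitrMr. Qed.

Lemma dscale_comp n (d e d' e' : 'I_n -> R) X :
  dscale d e (dscale d' e' X) = dscale (fun i => d i * d' i) (fun j => e' j * e j) X.
Proof. by apply/matrixP => i j; rewrite !mxE !mulrA. Qed.

Lemma dscaleK n (d e : 'I_n -> R) (X : 'M[R]_n) : unit_fun d -> unit_fun e ->
  dscale (fun i => (d i)^-1) (fun j => (e j)^-1) (dscale d e X) = X.
Proof.
move=> ud ue; apply/matrixP => i j; rewrite !mxE !mulrA mulVr // mul1r.
by rewrite -mulrA mulrV // mulr1.
Qed.

End DiagonalScaling.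

Section EntrywiseInverse.
Variable R : unitRingType.

Definition trinv n (X : 'M[R]_n) : 'M[R]_n := \matrix_(i, j) (X j i)^-1.

Lemma trinvK n : involutive (@trinv n).
Proof. by move=> X; apply/matrixP => i j; rewrite !mxE invrK. Qed.

Lemma unit_entries_trinv n (X : 'M[R]_n) : unit_entries (trinv X) <-> unit_entries X.
Proof. by split=> uX i j; [have := uX j i | ]; rewrite mxE unitrV. Qed.

Lemma mxsub_trinv m n (f g : 'I_m -> 'I_n) (X : 'M[R]_n) :
  mxsub f g (trinv X) = trinv (mxsub g f X).
Proof. by apply/matrixP => a b; rewrite !mxE. Qed.

Lemma trinv_dscale n (d e : 'I_n -> R) (X : 'M[R]_n) :
  unit_fun d -> unit_fun e -> unit_entries X ->
  trinv (dscale d e X) = dscale (fun j => (e j)^-1) (fun i => (d i)^-1) (trinv X).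
Proof.
move=> ud ue uX; apply/matrixP => i j; rewrite !mxE.
by rewrite invrM ?unitrMr // invrM // mulrA.
Qed.

(* the quasideterminant of [x y; z w] with respect to its entry [x] *)
Definition qdet2 (x y z w : R) : R := x - y * w^-1 * z.

Lemma qdet2_inv (x y z w : R) : y \is a GRing.unit -> z \is a GRing.unit ->
  qdet2 w^-1 y^-1 z^-1 x^-1 = - (y^-1 * qdet2 x y z w * z^-1).
Proof.
move=> uy uz; rewrite /qdet2 invrK mulrBr mulrBl !mulrA mulVr // mul1r.
by rewrite -(mulrA _ z) mulrV // mulr1 opprB.
Qed.

Lemma unitrN_sandwich (u x v : R) : u \is a GRing.unit -> v \is a GRing.unit ->
  (- (u * x * v) \is a GRing.unit) = (x \is a GRing.unit).
Proof. by move=> uu uv; rewrite unitrN unitrMl // unitrMr. Qed.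

Lemma invr_eq_two_sided (x y : R) : x * y = 1 -> y * x = 1 -> x^-1 = y.
Proof.
move=> xy yx; have ux : x \is a GRing.unit by apply/unitrP; exists y.
by rewrite -[y]mul1r -(mulVr ux) -mulrA xy mulr1.
Qed.

Lemma mx_invertible_trinv2 (X : 'M[R]_2) : unit_entries X ->
  mx_invertible (trinv X) <-> mx_invertible X.
Proof.
move=> uX; pose l : 'I_2 := lift ord0 ord0.
have rev0 : rev_ord ord0 = l by apply: val_inj.
have revl : rev_ord l = ord0 by apply: val_inj.
rewrite (mx_invertible_schur0 (X := trinv X)) ?mxE ?unitrV //.
rewrite -(mx_invertible_mxsub X (inv_bij (@rev_ordK 2)) (inv_bij (@rev_ordK 2))).
rewrite (mx_invertible_schur0 (X := mxsub _ _ X)) ?mxE ?rev0 //.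
rewrite !mx_invertible1 !mxE -/l revl rev0 invrK.
have := qdet2_inv (X ord0 ord0) (X l l) (uX ord0 l) (uX l ord0); rewrite /qdet2 invrK => ->.
by rewrite unitrN_sandwich ?unitrV.
Qed.

Definition qdet_mx n (X : 'M[R]_n.+1) : 'M[R]_n := \matrix_(a, b)
  qdet2 (X ord0 ord0) (X ord0 (lift ord0 a)) (X (lift ord0 b) ord0) (X (lift ord0 b) (lift ord0 a)).

Lemma schur0_trinv n (X : 'M[R]_n.+1) : unit_entries X ->
  schur0 (trinv X) =
  dscale (fun a => - (X ord0 (lift ord0 a))^-1) (fun b => (X (lift ord0 b) ord0)^-1) (qdet_mx X).
Proof.
move=> uX; apply/matrixP => a b; rewrite !mxE.
have := qdet2_inv (X ord0 ord0) (X (lift ord0 b) (lift ord0 a))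
  (uX ord0 (lift ord0 a)) (uX (lift ord0 b) ord0).
by rewrite /qdet2 invrK => ->; rewrite !mulNr.
Qed.

Lemma mx_invertible_trinv_qdet n (X : 'M[R]_n.+1) : unit_entries X ->
  mx_invertible (trinv X) <-> mx_invertible (qdet_mx X).
Proof.
move=> uX; rewrite mx_invertible_schur0 ?mxE ?unitrV // schur0_trinv //.
by apply: mx_invertible_dscale => i; rewrite ?unitrN unitrV.
Qed.

End EntrywiseInverse.

Section Size3.
Variable R : unitRingType.

Lemma lift_lift0_ord0 n (x : 'I_n.+1) : lift (lift ord0 x) ord0 = ord0 :> 'I_n.+2.
Proof. exact: val_inj. Qed.

Lemma lift_ord_max_ord0 : lift (ord_max : 'I_2) (ord0 : 'I_1) = ord0.
Proof. exact: val_inj. Qed.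

Lemma lift_rev_ord_max (x : 'I_2) :
  lift (lift ord0 (rev_ord x)) ord_max = lift ord0 x :> 'I_3.
Proof. by apply: val_inj; case: x => [[|[|]]]. Qed.

(* Jacobi's identity twice: for the 2x2 minor of [N] avoiding row [k'] and
   column [j'], then for the top left entry of the inverse of that minor. *)
Lemma qdet_mx_inv_of (M N : 'M[R]_3) (a b : 'I_2) :
  mx_inv_of M N -> unit_entries M -> unit_entries N ->
  qdet_mx N a b * qdet_mx M (rev_ord b) (rev_ord a) = 1 /\
  qdet_mx M (rev_ord b) (rev_ord a) * qdet_mx N a b = 1.
Proof.
move=> hMN uM uN; set j' := lift ord0 (rev_ord a); set k' := lift ord0 (rev_ord b).
have [_ /(_ (uM j' k')) hP] := mx_inv_of_minor k' j' (mx_inv_ofC hMN).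
have [_ hQ] := mx_inv_of_minor ord_max ord_max (mx_inv_ofC hP).
move: hQ; rewrite mxE !lift_rev_ord_max => /(_ (uN _ _)) /mx_inv_of1.
rewrite !mxE lift_ord_max_ord0 !lift_lift0_ord0 !lift_rev_ord_max.
by case=> pq qp; split.
Qed.


Lemma mx_invertible_trinv_inv_of (M N : 'M[R]_3) :
  mx_inv_of M N -> unit_entries M -> unit_entries N ->
  mx_invertible (trinv N) <-> mx_invertible (trinv M).
Proof.
move=> hMN uM uN; pose Q := mxsub (@rev_ord 2) (@rev_ord 2) (qdet_mx M).
have hQ a b := qdet_mx_inv_of a b hMN uM uN.
have uQ : unit_entries Q.
  by move=> a b; have [NM MN] := hQ b a; rewrite mxE; apply/unitrP; exists (qdet_mx N b a).
have eN : qdet_mx N = trinv Q.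
  apply/matrixP => a b; have [NM MN] := hQ a b.
  by rewrite [trinv _ _ _]mxE /Q [mxsub _ _ _ _ _]mxE (invr_eq_two_sided MN NM).
rewrite (mx_invertible_trinv_qdet uN) eN mx_invertible_trinv2 //.
rewrite (mx_invertible_mxsub _ (inv_bij (@rev_ordK 2)) (inv_bij (@rev_ordK 2))).
by rewrite mx_invertible_trinv_qdet.
Qed.

End Size3.

Section SetS.
Variable R : unitRingType.
Implicit Types M N Y : 'M[R]_3.

Lemma all_unitsP M : reflect (unit_entries M) (all_units M).
Proof.
apply: (iffP forallP) => [uM i j | uM i]; first exact: (forallP (uM i)).
by apply/forallP => j; apply: uM.
Qed.

Lemma J1_inv_of M N : J1 M = Some N <-> mx_inv_of M N.
Proof.
rewrite /J1; case: excluded_middle_informative => [hM | nM]; last first.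
  by split=> // hMN; case: nM; exists N.
case: (constructive_indefinite_description _ hM) => N' hMN' /=.
by split=> [[<-] | hMN] //; rewrite (mx_inv_of_uniq hMN' hMN).
Qed.

Lemma J1_None M : J1 M = None <-> ~ mx_invertible M.
Proof.
rewrite /J1; case: excluded_middle_informative => [hM | //].
by case: (constructive_indefinite_description _ hM).
Qed.

Lemma J2_unit_entries M : unit_entries M -> J2 M = Some (trinv M).
Proof. by rewrite /J2 => /all_unitsP ->. Qed.

Lemma J_inv_of M N : mx_inv_of M N -> unit_entries N -> J M = Some (trinv N).
Proof. by move=> /J1_inv_of hMN uN; rewrite /J /Defs.pcomp hMN J2_unit_entries. Qed.

Lemma pdom_J M : pdom (@J R) M <-> exists N, mx_inv_of M N /\ unit_entries N.
Proof.
split=> [|[N [hMN uN]]]; last by rewrite /pdom (J_inv_of hMN uN).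
rewrite /pdom /J /Defs.pcomp; case eM: (J1 M) => [N|//].
by rewrite /J2; case: all_unitsP => // uN _; exists N; split=> //; apply/J1_inv_of.
Qed.

Lemma pdom_Jinv M : pdom (@Jinv R) M <-> unit_entries M /\ mx_invertible (trinv M).
Proof.
rewrite /pdom /Jinv /Defs.pcomp /J2; case: all_unitsP => [uM | nuM]; last by split=> // -[].
by rewrite J1_None; split=> [/NNPP | [_ hM] /(_ hM)].
Qed.

Definition inS_inv M : Prop := exists N,
  [/\ mx_inv_of M N, unit_entries M, unit_entries N & mx_invertible (trinv M)].

Lemma inS_inv_pdom M : inS_inv M <-> pdom (@J R) M /\ pdom (@Jinv R) M.
Proof.
rewrite pdom_J pdom_Jinv; split=> [[N [hMN uM uN hM]] | [[N [hMN uN]] [uM hM]]].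
  by split=> //; exists N.
by exists N.
Qed.

Lemma unit_entries_inv_trinv M N Q :
  mx_inv_of M N -> unit_entries N -> mx_inv_of (trinv N) Q ->
  unit_entries Q <-> unit_entries M.
Proof.
move=> hMN uN hQ.
have entry i j : Q j i \is a GRing.unit <-> M i j \is a GRing.unit.
  rewrite -(mx_invertible_minor i j hQ) mxsub_trinv mx_invertible_trinv2.
    exact: mx_invertible_minor (mx_inv_ofC hMN).
  by move=> a b; rewrite mxE.
by split=> u i j; [apply/entry | apply/entry].
Qed.

Lemma J_inS M : inS_inv M -> exists2 Y, J M = Some Y & inS_inv Y.
Proof.
case=> N [hMN uM uN hM]; exists (trinv N); first exact: J_inv_of.
have [Q hQ] : mx_invertible (trinv N) by apply/(mx_invertible_trinv_inv_of hMN).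
exists Q; split=> //; first by apply/unit_entries_trinv.
  by apply/(unit_entries_inv_trinv hMN uN hQ).
by rewrite trinvK; exists M; apply: mx_inv_ofC.
Qed.

Lemma inS_of_pdom_J2 M : pdom (piter 2 (@J R)) M -> inS_inv M.
Proof.
move=> /pdom_piter2 [Y eY /pdom_J [Q [hQ uQ]]].
have /pdom_J [N [hMN uN]] : pdom (@J R) M by rewrite /pdom eY.
move: eY hQ; rewrite (J_inv_of hMN uN) => -[<-] hQ.
have uM := proj1 (unit_entries_inv_trinv hMN uN hQ) uQ.
by exists N; split=> //; apply/(mx_invertible_trinv_inv_of hMN) => //; exists Q.
Qed.

Lemma J_inj M M' : pdom (@J R) M -> pdom (@J R) M' -> J M = J M' -> M = M'.
Proof.
move=> /pdom_J [N [hMN uN]] /pdom_J [N' [hMN' uN']].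
rewrite (J_inv_of hMN uN) (J_inv_of hMN' uN') => -[/(can_inj (@trinvK R 3)) eN].
by apply: mx_inv_of_uniq (mx_inv_ofC hMN) _; rewrite eN; apply: mx_inv_ofC.
Qed.

Lemma J_surj Y : inS_inv Y -> exists2 M, inS_inv M & J M = Some Y.
Proof.
case=> N [hYN uY uN [K hK]]; exists K; last first.
  by rewrite (J_inv_of (mx_inv_ofC hK)) ?trinvK //; apply/unit_entries_trinv.
have uK := proj2 (unit_entries_inv_trinv (mx_inv_ofC hYN) uY hK) uN.
have uY' : unit_entries (trinv Y) by apply/unit_entries_trinv.
exists (trinv Y); split=> //; first exact: mx_inv_ofC.
by rewrite (mx_invertible_trinv_inv_of hK) ?trinvK //; exists N.
Qed.

Lemma J_bij : pbij_on inS_inv (@J R).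
Proof.
split; [exact: J_inS | | exact: J_surj].
by move=> M M' /inS_inv_pdom [hM _] /inS_inv_pdom [hM' _]; apply: J_inj.
Qed.

Lemma incr_const (i : 'I_3) : incr (fun _ : 'I_1 => i).
Proof. by move=> a b; rewrite !ord1. Qed.

Lemma incr_lift (i : 'I_3) : incr (lift i : 'I_2 -> 'I_3).
Proof. by move=> a b ab; rewrite /= /bump; case: (leqP i a); case: (leqP i b) => /=; lia. Qed.

Lemma incr2_lift (f : 'I_2 -> 'I_3) : incr f -> exists i : 'I_3, f =1 lift i.
Proof.
move=> hf; have f01 := hf ord0 ord_max isT; have f1 := ltn_ord (f ord_max).
exists (inord (3 - f ord0 - f ord_max)) => a; apply: val_inj.
rewrite /= /bump inordK; last lia.
have [->|->] : a = ord0 \/ a = ord_max.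
  by case: a => [[|[|]]] // ?; [left | right]; apply: val_inj.
all: by rewrite /=; case: leqP => /=; lia.
Qed.

Lemma incr3_id (f : 'I_3 -> 'I_3) : incr f -> f =1 id.
Proof.
move=> hf [k hk]; apply: val_inj => /=.
have f01 := hf (Ordinal (isT : 0 < 3)%N) (Ordinal (isT : 1 < 3)%N) isT.
have f12 := hf (Ordinal (isT : 1 < 3)%N) (Ordinal (isT : 2 < 3)%N) isT.
have f2 := ltn_ord (f (Ordinal (isT : 2 < 3)%N)).
by case: k hk => [|[|[|//]]] hk; rewrite (bool_irrelevance hk isT); lia.
Qed.

Lemma incr_large m (f : 'I_m.+4 -> 'I_3) : ~ incr f.
Proof.
move=> hf; have f01 := hf (Ordinal (isT : 0 < m.+4)%N) (Ordinal (isT : 1 < m.+4)%N) isT.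
have f12 := hf (Ordinal (isT : 1 < m.+4)%N) (Ordinal (isT : 2 < m.+4)%N) isT.
have f23 := hf (Ordinal (isT : 2 < m.+4)%N) (Ordinal (isT : 3 < m.+4)%N) isT.
have f3 := ltn_ord (f (Ordinal (isT : 3 < m.+4)%N)); lia.
Qed.

Lemma inS_iff M : inS M <-> inS_inv M.
Proof.
split=> [[hsub [Y eY hY]] | [N [hMN uM uN hM]]]; last first.
  split; last by exists (trinv M) => //; apply: J2_unit_entries.
  case=> [|[|[|[|m]]]] f g // _ hf hg.
  - by apply/mx_invertible1; rewrite mxE.
  - have [i fi] := incr2_lift hf; have [j gj] := incr2_lift hg.
    have -> : mxsub f g M = mxsub (lift i) (lift j) M.
      by apply/matrixP => a b; rewrite !mxE fi gj.
    exact/(mx_invertible_minor i j hMN).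
  - have -> : mxsub f g M = M.
      by apply/matrixP => a b; rewrite !mxE (incr3_id hf) (incr3_id hg).
    by exists N.
  - by case: (incr_large hf).
have uM : unit_entries M.
  move=> i j; have /mx_invertible1 := hsub 1%N _ _ isT (incr_const i) (incr_const j).
  by rewrite mxE.
have [N hMN] : mx_invertible M.
  by have := hsub 3%N id id isT (fun _ _ => id) (fun _ _ => id); rewrite mxsub_id.
exists N; split=> //; last by move: eY; rewrite J2_unit_entries // => -[->].
by move=> j i; apply/(mx_invertible_minor i j hMN)/hsub => //; apply: incr_lift.
Qed.

End SetS.

Section Phi.
Variable R : unitRingType.
Implicit Types A N Y : 'M[R]_3.

Lemma inS_inv_dscale (d e : 'I_3 -> R) A : unit_fun d -> unit_fun e ->
  inS_inv A -> inS_inv (dscale d e A).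
Proof.
move=> ud ue [N [hAN uA uN hA]]; have [ud' ue'] := (unit_funV ud, unit_funV ue).
exists (dscale (fun j => (e j)^-1) (fun i => (d i)^-1) N); split.
- exact: mx_inv_of_dscale.
- exact: unit_entries_dscale.
- exact: unit_entries_dscale.
- by rewrite trinv_dscale // mx_invertible_dscale.
Qed.

Lemma pdom_J_dscale (d e : 'I_3 -> R) A : unit_fun d -> unit_fun e ->
  pdom (@J R) A -> pdom (@J R) (dscale d e A).
Proof.
move=> ud ue /pdom_J [N [hAN uN]]; apply/pdom_J.
exists (dscale (fun j => (e j)^-1) (fun i => (d i)^-1) N); split; first exact: mx_inv_of_dscale.
by apply: unit_entries_dscale => //; apply: unit_funV.
Qed.

Lemma hat_dscale_eq (u w : 'I_3 -> R) A : is_hat A -> is_hat (dscale u w A) ->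
  w ord0 = 1 -> dscale u w A = A.
Proof.
move=> hA hB w0; have u1 i : u i = 1.
  by have [_] := hB i; rewrite mxE (proj2 (hA i)) w0 !mulr1.
have w1 j : w j = 1 by have [+ _] := hB j; rewrite mxE (proj1 (hA j)) u1 !mul1r.
by apply/matrixP => i j; rewrite mxE u1 w1 mul1r mulr1.
Qed.

Lemma LamL_dscale N :
  LamL N = dscale (fun j => N ord0 ord0 * (N j ord0)^-1) (fun k => (N ord0 k)^-1) N.
Proof. by apply/matrixP => i j; rewrite !mxE. Qed.

Lemma LamR_dscale N :
  LamR N = dscale (fun j => (N j ord0)^-1) (fun k => (N ord0 k)^-1 * N ord0 ord0) N.
Proof. by apply/matrixP => i j; rewrite !mxE !mulrA. Qed.

Lemma trinv_LamL N : unit_entries N ->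
  trinv (LamL N) = dscale (fun j => N ord0 j) (fun k => N k ord0 * (N ord0 ord0)^-1) (trinv N).
Proof.
move=> uN; rewrite LamL_dscale trinv_dscale //; last by move=> i; rewrite unitrV.
  by apply/matrixP => i j; rewrite !mxE invrK invrM ?unitrV // invrK.
by move=> i; rewrite unitrMl ?unitrV.
Qed.

Lemma is_hat_trinv_LamL N : unit_entries N -> is_hat (trinv (LamL N)).
Proof.
move=> uN i; rewrite !mxE; split.
  by rewrite -(mulrA (N ord0 ord0)) mulVr // mulr1 mulrV // invr1.
by rewrite mulrV // mul1r mulrV // invr1.
Qed.

Lemma Phi_inv_of A N : is_hat A -> unit_entries A -> mx_inv_of A N -> unit_entries N ->
  Phi A = Some (trinv (LamL N)).
Proof.
move=> hA uA /J1_inv_of hAN /all_unitsP uN; rewrite /Phi.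
by case: excluded_middle_informative => [_ | []]; [rewrite hAN uN | split=> //; apply/all_unitsP].
Qed.

Lemma pdom_Phi A : pdom (@Phi R) A <-> [/\ is_hat A, unit_entries A & pdom (@J R) A].
Proof.
split=> [|[hA uA /pdom_J [N [hAN uN]]]]; last by rewrite /pdom (Phi_inv_of hA uA hAN uN).
rewrite /pdom /Phi; case: excluded_middle_informative => // -[hA /all_unitsP uA].
case eA: (J1 A) => [N|//]; case: all_unitsP => // uN _; split=> //.
by apply/pdom_J; exists N; split=> //; apply/J1_inv_of.
Qed.

Lemma pdom_Phiinv A :
  pdom (@Phiinv R) A <-> [/\ is_hat A, unit_entries A & pdom (@J R) (trinv A)].
Proof.
rewrite {1}/pdom /Phiinv /Jinv /Defs.pcomp /J2.
case: excluded_middle_informative => hA; last by split=> // -[].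
case: all_unitsP => uA; last by split=> // -[].
change (J2tot A) with (trinv A).
case eK: (J1 (trinv A)) => [K|]; last first.
  by split=> // -[_ _ /pdom_J [K [/J1_inv_of hK _]]]; rewrite hK in eK.
have /J1_inv_of hK := eK; split=> [| [_ _ /pdom_J [K' [hK' uK']]]].
  by case: all_unitsP => // uK _; split=> //; apply/pdom_J; exists K.
by rewrite (mx_inv_of_uniq hK hK'); case: all_unitsP.
Qed.

Lemma is_hat_LamR N : unit_entries N -> is_hat (LamR N).
Proof.
move=> uN i; rewrite !mxE; split.
  by rewrite -(mulrA _ (N ord0 i)) mulrV // mulr1 mulVr.
by rewrite mulVr // mul1r mulVr.
Qed.

Lemma hat_inv_dscale_eq (d e : 'I_3 -> R) A A' N :
  is_hat A -> is_hat A' -> unit_fun d -> unit_fun e -> d ord0 = 1 ->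
  mx_inv_of A N -> mx_inv_of A' (dscale d e N) -> A' = A.
Proof.
move=> hA hA' ud ue d0 /mx_inv_ofC /(mx_inv_of_dscale ud ue) hN /mx_inv_ofC hN'.
rewrite (mx_inv_of_uniq hN' hN) in hA' *.
by apply: hat_dscale_eq; rewrite // d0 invr1.
Qed.

Definition inShat_inv A : Prop := inS_inv A /\ is_hat A.

Lemma inShat_inv_pdom A : inShat_inv A <-> pdom (@Phi R) A /\ pdom (@Phiinv R) A.
Proof.
rewrite pdom_Phi pdom_Phiinv; split=> [[hS hA] | [[hA uA hJ] [_ _ /pdom_J [K [hK uK]]]]].
  have [hJ _] := proj1 (inS_inv_pdom A) hS.
  case: hS => N [hAN uA uN [K hK]]; split; split=> //; apply/pdom_J; exists K; split=> //.
  exact/(unit_entries_inv_trinv (mx_inv_ofC hAN) uA hK).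
split=> //; apply/inS_inv_pdom; split=> //; apply/pdom_Jinv; split=> //.
by exists K.
Qed.

Lemma Phi_inShat A : inShat_inv A -> exists2 Y, Phi A = Some Y & inShat_inv Y.
Proof.
case=> hS hA; have [N [hAN uA uN _]] := hS.
exists (trinv (LamL N)); first exact: Phi_inv_of.
split; last exact: is_hat_trinv_LamL.
have [Y] := J_inS hS; rewrite (J_inv_of hAN uN) => -[<-] hY.
by rewrite trinv_LamL //; apply: inS_inv_dscale => // i; rewrite ?unitrMl ?unitrV.
Qed.

Lemma inShat_of_pdom_Phi2 A : pdom (piter 2 (@Phi R)) A -> inShat_inv A.
Proof.
move=> /pdom_piter2 [Y eY /pdom_Phi [_ _ hY]].
have /pdom_Phi [hA uA /pdom_J [N [hAN uN]]] : pdom (@Phi R) A by rewrite /pdom eY.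
pose u j := N ord0 j; pose w k := N k ord0 * (N ord0 ord0)^-1.
have uu : unit_fun u by move=> i; apply: uN.
have uw : unit_fun w by move=> i; rewrite unitrMl ?unitrV.
move: eY hY; rewrite (Phi_inv_of hA uA hAN uN) trinv_LamL // -/u -/w => -[<-].
move=> /(pdom_J_dscale (unit_funV uu) (unit_funV uw)); rewrite dscaleK // => hJ.
split=> //; apply: inS_of_pdom_J2; apply/pdom_piter2.
by exists (trinv N); first exact: J_inv_of.
Qed.

Lemma Phi_inj A A' : pdom (@Phi R) A -> pdom (@Phi R) A' -> Phi A = Phi A' -> A = A'.
Proof.
move=> /pdom_Phi [hA uA /pdom_J [N [hAN uN]]] /pdom_Phi [hA' uA' /pdom_J [N' [hAN' uN']]].
rewrite (Phi_inv_of hA uA hAN uN) (Phi_inv_of hA' uA' hAN' uN').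
move=> [/(can_inj (@trinvK R 3))]; rewrite !LamL_dscale => eL.
have ud (X : 'M[R]_3) : unit_entries X -> unit_fun (fun j => X ord0 ord0 * (X j ord0)^-1).
  by move=> uX i; rewrite unitrMl ?unitrV.
have ue (X : 'M[R]_3) : unit_entries X -> unit_fun (fun k => (X ord0 k)^-1).
  by move=> uX i; rewrite unitrV.
have := dscaleK N' (ud _ uN') (ue _ uN'); rewrite -eL dscale_comp => eN'.
move: hAN'; rewrite -eN' => hAN'; symmetry; apply: (hat_inv_dscale_eq hA hA' _ _ _ hAN hAN').
- by move=> i; rewrite unitrMl ?unitrV //; apply: ud.
- by move=> i; rewrite unitrMl ?unitrV //; apply: ue.
- by rewrite !mulrV // invr1 mulr1.
Qed.

Lemma Phi_surj Y : inShat_inv Y -> exists2 A, inShat_inv A & Phi A = Some Y.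
Proof.
case=> /J_surj [K hK eK] hY; have [NK [hKN uK uNK _]] := hK.
move: eK; rewrite (J_inv_of hKN uNK) => -[eY].
pose d j := (K j ord0)^-1; pose e k := (K ord0 k)^-1 * K ord0 ord0.
have ud : unit_fun d by move=> i; rewrite unitrV.
have ue : unit_fun e by move=> i; rewrite unitrMl ?unitrV.
have hatA : is_hat (dscale d e K) by rewrite -LamR_dscale; apply: is_hat_LamR.
exists (LamR K); rewrite LamR_dscale -/d -/e; first by split=> //; apply: inS_inv_dscale.
have hAN := mx_inv_of_dscale ud ue hKN.
have uNA := unit_entries_dscale (unit_funV ue) (unit_funV ud) uNK.
rewrite (Phi_inv_of hatA (unit_entries_dscale ud ue uK) hAN uNA); congr Some.
have := is_hat_trinv_LamL uNA; subst Y.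
rewrite trinv_LamL // (trinv_dscale (unit_funV ue) (unit_funV ud) uNK) dscale_comp => hatP.
by rewrite hat_dscale_eq // mulrV // mulr1 invrK /e mulVr.
Qed.

Lemma Phi_bij : pbij_on inShat_inv (@Phi R).
Proof.
split; [exact: Phi_inShat | | exact: Phi_surj].
by move=> A A' /inShat_inv_pdom [hA _] /inShat_inv_pdom [hA' _]; apply: Phi_inj.
Qed.

End Phi.

Theorem theorem2 (R : unitRingType) (k : nat) (hk : (2 <= k)%N) :
  ((forall M : 'M[R]_3, inS M <-> pdom (@J R) M /\ pdom (@Jinv R) M) /\
   (forall M : 'M[R]_3, pdom (@J R) M /\ pdom (@Jinv R) M <-> pdom (piter k (@J R)) M)) /\
  ((forall M : 'M[R]_3, inShat M <-> pdom (@Phi R) M /\ pdom (@Phiinv R) M) /\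
   (forall M : 'M[R]_3, pdom (@Phi R) M /\ pdom (@Phiinv R) M <-> pdom (piter k (@Phi R)) M)) /\
  (pbij_on (@inS R) (@J R) /\ pbij_on (@inShat R) (@Phi R)).
Proof.
have eS (M : 'M[R]_3) : inS M <-> inS_inv M by apply: inS_iff.
have eShat (M : 'M[R]_3) : inShat M <-> inShat_inv M by rewrite /inShat eS.
split; [split | split; [split | split]] => [M | M | M | M | |].
- by rewrite eS inS_inv_pdom.
- by rewrite -inS_inv_pdom; apply: pdom_piter_stable hk (@J_inS R) (@inS_of_pdom_J2 R) M.
- by rewrite eShat inShat_inv_pdom.
- rewrite -inShat_inv_pdom.
  exact: pdom_piter_stable hk (@Phi_inShat R) (@inShat_of_pdom_Phi2 R) M.
- by apply: pbij_on_eq (@J_bij R) => M; rewrite eS.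
- by apply: pbij_on_eq (@Phi_bij R) => M; rewrite eShat.
Qed.
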